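(* Let $m,n$ be positive integers and let $g,h$ be orientation-preserving $C^2$ diffeomorphisms of $I=[0,1]$ satisfying $gh^mg^{-1}=h^n$. Then $h$ and $ghg^{-1}$ commute. *)

From Stdlib Require Import Reals.
From Coquelicot Require Import Coquelicot.
Open Scope R_scope.

Definition inI (x : R) : Prop := 0 <= x <= 1.

Definition has_deriv_I (f : R -> R) (x l : R) : Prop :=
  filterlim (fun y => (f y - f x) / (y - x))
            (within (fun y => inI y /\ y <> x) (locally x)) (locally l).

Definition C2_on_I (f : R -> R) : Prop :=
  exists f1 f2 : R -> R,
    (forall x, inI x -> has_deriv_I f x (f1 x)) /\
    (forall x, inI x -> has_deriv_I f1 x (f2 x)) /\
    (forall x, inI x -> filterlim f2 (within inI (locally x)) (locally (f2 x))).

Definition inverse_on_I (f finv : R -> R) : Prop :=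
  (forall x, inI x -> inI (f x)) /\
  (forall x, inI x -> inI (finv x)) /\
  (forall x, inI x -> finv (f x) = x) /\
  (forall x, inI x -> f (finv x) = x).

Definition orient_pres_C2_diffeo (f : R -> R) : Prop :=
  (exists finv, inverse_on_I f finv /\ C2_on_I f /\ C2_on_I finv) /\
  (forall x y, inI x -> inI y -> x < y -> f x < f y).

Fixpoint fiter (n : nat) (h : R -> R) (x : R) : R :=
  match n with O => x | S k => h (fiter k h x) end.

From Stdlib Require Import Reals Lra Lia Classical.
From Coquelicot Require Import Coquelicot.
Open Scope R_scope.

(* Put f := g h g^-1, so that f^m = h^n.  Both f and h commute with h^n, hence
   so does W := f^-1 h f h^-1, and W(h x) = h x is the claim.  Points fixed by
   h are fixed by f, and the claim is trivial there.  On a component (a, b) of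
   the complement of Fix(h), W fixes a and b; if W had no fixed point inside,
   then W < id, say, i.e. h f h^-1 < f on (a, b), and iterating would give
   h f^m h^-1 < f^m there, contradicting h f^m h^-1 = h h^n h^-1 = f^m.  So W
   has a fixed point in (a, b), and Kopell's lemma applied to the C^2 map h^n
   (or h^-n), which has no fixed point in (a, b), and the C^1 map W commuting
   with it, gives W = id on (a, b). *)

(** * Continuity and derivatives relative to I *)

Definition continuous_in_I (f : R -> R) (x : R) : Prop :=
  forall eps, 0 < eps -> exists del, 0 < del /\
    forall y, inI y -> Rabs (y - x) < del -> Rabs (f y - f x) < eps.

Definition maps_I (f : R -> R) : Prop := forall x, inI x -> inI (f x).

Definition incr_on_I (f : R -> R) : Prop :=
  forall x y, inI x -> inI y -> x < y -> f x < f y.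

Lemma filterlim_within_eps (P : R -> Prop) (f : R -> R) (x l : R) :
  filterlim f (within P (locally x)) (locally l) ->
  forall eps, 0 < eps -> exists del, 0 < del /\
    forall y, P y -> Rabs (y - x) < del -> Rabs (f y - l) < eps.
Proof.
  intros H eps Heps.
  destruct (proj1 (filterlim_locally f l) H (mkposreal eps Heps)) as [d Hd].
  exists d; split; [apply cond_pos|].
  intros y Py Hy. exact (Hd y Hy Py).
Qed.

Lemma has_deriv_I_eps f x l : has_deriv_I f x l ->
  forall eps, 0 < eps -> exists del, 0 < del /\
    forall y, inI y -> y <> x -> Rabs (y - x) < del ->
      Rabs ((f y - f x) / (y - x) - l) < eps.
Proof.
  intros H eps Heps.
  destruct (filterlim_within_eps _ _ _ _ H eps Heps) as [d [Hd Hy]].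
  exists d; split; auto.
Qed.

Lemma exp_le_compat x y : x <= y -> exp x <= exp y.
Proof. intros [Lt | ->]; [left; apply exp_increasing; auto | lra]. Qed.

Lemma Rabs_lt_Rmin_l x d e : Rabs x < Rmin d e -> Rabs x < d.
Proof. intros H; eapply Rlt_le_trans; [exact H | apply Rmin_l]. Qed.

Lemma Rabs_lt_Rmin_r x d e : Rabs x < Rmin d e -> Rabs x < e.
Proof. intros H; eapply Rlt_le_trans; [exact H | apply Rmin_r]. Qed.

Lemma continuous_in_I_of_slope_bound f x K d : 0 < d ->
  (forall y, inI y -> y <> x -> Rabs (y - x) < d -> Rabs ((f y - f x) / (y - x)) <= K) ->
  continuous_in_I f x.
Proof.
  intros Hd Hsl eps Heps.
  assert (HK : 0 < Rabs K + 1) by (pose proof (Rabs_pos K); lra).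
  exists (Rmin d (eps / (Rabs K + 1))); split.
  { apply Rmin_glb_lt; [lra | apply Rdiv_lt_0_compat; lra]. }
  intros y Hy Hyx.
  destruct (Req_dec y x) as [-> | Hne].
  { rewrite Rminus_diag, Rabs_R0; auto. }
  specialize (Hsl y Hy Hne (Rabs_lt_Rmin_l _ _ _ Hyx)).
  apply Rabs_lt_Rmin_r in Hyx.
  replace (f y - f x) with ((f y - f x) / (y - x) * (y - x)) by (field; lra).
  rewrite Rabs_mult.
  apply Rle_lt_trans with ((Rabs K + 1) * Rabs (y - x)).
  { apply Rmult_le_compat_r; [apply Rabs_pos | pose proof (Rle_abs K); lra]. }
  apply Rlt_le_trans with ((Rabs K + 1) * (eps / (Rabs K + 1))).
  { apply Rmult_lt_compat_l; auto. }
  right; field; lra.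
Qed.

Lemma has_deriv_I_continuous f x l : has_deriv_I f x l -> continuous_in_I f x.
Proof.
  intros H.
  destruct (has_deriv_I_eps f x l H 1 Rlt_0_1) as [d [Hd Hsl]].
  apply (continuous_in_I_of_slope_bound f x (Rabs l + 1) d Hd).
  intros y Hy Hne Hyx. specialize (Hsl y Hy Hne Hyx).
  pose proof (Rabs_triang_inv ((f y - f x) / (y - x)) l). lra.
Qed.

(* Stdlib's mean value, intermediate value and extreme value theorems ask for
   continuity on all of R; precomposing with the retraction [clamp] of R onto
   I extends a function continuous on I to such a function. *)
Definition clamp (x : R) : R := Rmax 0 (Rmin 1 x).

Lemma clamp_inI x : inI (clamp x).
Proof.
  unfold clamp, inI, Rmax, Rmin.
  destruct (Rle_dec 1 x); destruct (Rle_dec 0 _); lra.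
Qed.

Lemma clamp_id x : inI x -> clamp x = x.
Proof.
  unfold clamp, inI, Rmax, Rmin; intros.
  destruct (Rle_dec 1 x); destruct (Rle_dec 0 _); lra.
Qed.

Lemma clamp_lipschitz x y : Rabs (clamp x - clamp y) <= Rabs (x - y).
Proof.
  unfold clamp, Rmax, Rmin.
  destruct (Rle_dec 1 x); destruct (Rle_dec 1 y);
  repeat destruct (Rle_dec 0 _); unfold Rabs; repeat destruct (Rcase_abs _); lra.
Qed.

Lemma continuity_clamp f : (forall x, inI x -> continuous_in_I f x) ->
  continuity (fun t => f (clamp t)).
Proof.
  intros Hc x eps Heps.
  destruct (Hc (clamp x) (clamp_inI x) eps Heps) as [d [Hd Hf]].
  exists d; split; auto.
  intros y [_ Hy]. simpl in *. unfold R_dist in *.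
  apply Hf; [apply clamp_inI |].
  eapply Rle_lt_trans; [apply clamp_lipschitz | exact Hy].
Qed.

Lemma derivable_pt_lim_clamp f x l : 0 < x < 1 -> has_deriv_I f x l ->
  derivable_pt_lim (fun t => f (clamp t)) x l.
Proof.
  intros Hx H eps Heps.
  destruct (has_deriv_I_eps f x l H eps Heps) as [d [Hd Hsl]].
  assert (Hm : 0 < Rmin d (Rmin x (1 - x))) by (repeat apply Rmin_glb_lt; lra).
  exists (mkposreal _ Hm). intros t Ht Htm. simpl in Htm.
  assert (Htx := Rabs_lt_Rmin_l _ _ _ (Rabs_lt_Rmin_r _ _ _ Htm)).
  assert (Ht1 := Rabs_lt_Rmin_r _ _ _ (Rabs_lt_Rmin_r _ _ _ Htm)).
  assert (HI : inI (x + t)) by (unfold inI, Rabs in *; destruct (Rcase_abs t); lra).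
  rewrite (clamp_id _ HI), (clamp_id x) by (unfold inI; lra).
  specialize (Hsl (x + t) HI).
  replace (x + t - x) with t in Hsl by ring.
  apply Hsl; [lra | exact (Rabs_lt_Rmin_l _ _ _ Htm)].
Qed.

Lemma mean_value_I f f1 : (forall x, inI x -> has_deriv_I f x (f1 x)) ->
  forall y z, inI y -> inI z -> y < z ->
  exists c, y <= c <= z /\ f z - f y = f1 c * (z - y).
Proof.
  intros Hd y z Hy Hz Hyz.
  destruct (MVT_gen (fun t => f (clamp t)) y z f1) as [c [Hc E]].
  - intros x Hx. rewrite Rmin_left, Rmax_right in Hx by lra.
    apply is_derive_Reals, derivable_pt_lim_clamp; [unfold inI in *; lra |].
    apply Hd. unfold inI in *; lra.
  - intros x _. apply continuity_clamp.
    intros t Ht. eapply has_deriv_I_continuous, Hd, Ht.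
  - rewrite Rmin_left, Rmax_right in Hc by lra.
    rewrite (clamp_id y Hy), (clamp_id z Hz) in E.
    exists c; auto.
Qed.

Lemma continuous_I_attains_min f : (forall x, inI x -> continuous_in_I f x) ->
  exists x0, inI x0 /\ forall x, inI x -> f x0 <= f x.
Proof.
  intros Hc.
  destruct (continuity_ab_min (fun t => f (clamp t)) 0 1 Rle_0_1) as [b [Hb Hb1]].
  { intros c _; apply continuity_clamp; auto. }
  exists b; split; [exact Hb1 |].
  intros x Hx. specialize (Hb x Hx). rewrite (clamp_id x Hx), (clamp_id b Hb1) in Hb. exact Hb.
Qed.

Lemma continuous_I_bounded f : (forall x, inI x -> continuous_in_I f x) ->
  exists M, forall x, inI x -> Rabs (f x) <= M.
Proof.
  intros Hc.
  destruct (continuous_I_attains_min f Hc) as [a [_ Ha]].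
  destruct (continuous_I_attains_min (fun x => - f x)) as [b [_ Hb]].
  { intros x Hx eps Heps. destruct (Hc x Hx eps Heps) as [d [Hd Hf]].
    exists d; split; auto. intros y Hy Hyx.
    replace (- f y - - f x) with (- (f y - f x)) by ring. rewrite Rabs_Ropp; auto. }
  exists (Rmax (Rabs (f a)) (Rabs (f b))).
  intros x Hx. specialize (Ha x Hx). specialize (Hb x Hx).
  unfold Rmax, Rabs; repeat destruct (Rcase_abs _); repeat destruct (Rle_dec _ _); lra.
Qed.

(** * Strict derivatives *)

Definition slope (f : R -> R) (y z : R) : R := (f z - f y) / (z - y).

Lemma slope_sym f y z : slope f y z = slope f z y.
Proof.
  unfold slope. destruct (Req_dec y z) as [-> | H]; [reflexivity | field; lra].
Qed.

Lemma slope_comp f g y z : y <> z -> f y <> f z ->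
  slope (fun x => g (f x)) y z = slope g (f y) (f z) * slope f y z.
Proof. intros Hyz Hf. unfold slope. field. lra. Qed.

Definition strict_deriv_I (f : R -> R) (c l : R) : Prop :=
  forall eps, 0 < eps -> exists del, 0 < del /\
    forall y z, inI y -> inI z -> y <> z -> Rabs (y - c) < del -> Rabs (z - c) < del ->
      Rabs (slope f y z - l) < eps.

Lemma exists_near_in_I c d : inI c -> 0 < d ->
  exists y, inI y /\ y <> c /\ Rabs (y - c) < d.
Proof.
  intros Hc Hd. unfold inI in *.
  set (t := Rmin d (1/2) / 2).
  assert (Ht : 0 < t /\ t < d /\ t <= 1/4) by (unfold t, Rmin; destruct (Rle_dec d (1/2)); lra).
  destruct (Rle_dec c (1/2)).
  - exists (c + t). replace (c + t - c) with t by ring. rewrite Rabs_right; lra.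
  - exists (c - t). replace (c - t - c) with (- t) by ring. rewrite Rabs_Ropp, Rabs_right; lra.
Qed.

Lemma strict_deriv_I_unique f c l l' : inI c ->
  strict_deriv_I f c l -> strict_deriv_I f c l' -> l = l'.
Proof.
  intros Hc H1 H2.
  destruct (Req_dec l l') as [E | Hne]; [exact E | exfalso].
  assert (Hpos : 0 < Rabs (l - l') / 2) by (pose proof (Rabs_pos_lt (l - l')); lra).
  destruct (H1 _ Hpos) as [d1 [Hd1 K1]].
  destruct (H2 _ Hpos) as [d2 [Hd2 K2]].
  destruct (exists_near_in_I c (Rmin d1 d2) Hc) as [y [Hy [Hyc Hyd]]].
  { apply Rmin_glb_lt; auto. }
  assert (Hcc : Rabs (c - c) < Rmin d1 d2) by (rewrite Rminus_diag, Rabs_R0; apply Rmin_glb_lt; auto).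
  specialize (K1 c y Hc Hy (not_eq_sym Hyc) (Rabs_lt_Rmin_l _ _ _ Hcc) (Rabs_lt_Rmin_l _ _ _ Hyd)).
  specialize (K2 c y Hc Hy (not_eq_sym Hyc) (Rabs_lt_Rmin_r _ _ _ Hcc) (Rabs_lt_Rmin_r _ _ _ Hyd)).
  pose proof (Rabs_triang (slope f c y - l') (l - slope f c y)).
  replace (slope f c y - l' + (l - slope f c y)) with (l - l') in H by ring.
  rewrite <- Rabs_Ropp with (x := l - slope f c y) in H.
  replace (- (l - slope f c y)) with (slope f c y - l) in H by ring.
  lra.
Qed.

Lemma strict_deriv_I_ext f g c l : (forall x, inI x -> f x = g x) ->
  strict_deriv_I f c l -> strict_deriv_I g c l.
Proof.
  intros E H eps Heps. destruct (H eps Heps) as [d [Hd K]].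
  exists d; split; auto. intros y z Hy Hz Hyz Hyc Hzc.
  unfold slope. rewrite <- (E y Hy), <- (E z Hz). apply K; auto.
Qed.

Lemma strict_deriv_I_id c : strict_deriv_I (fun x => x) c 1.
Proof.
  intros eps Heps. exists 1; split; [lra |]. intros y z _ _ Hyz _ _.
  unfold slope. replace ((z - y) / (z - y) - 1) with 0 by (field; lra).
  rewrite Rabs_R0; auto.
Qed.

Lemma slope_mean_value f f1 : (forall x, inI x -> has_deriv_I f x (f1 x)) ->
  forall y z, inI y -> inI z -> y <> z ->
  exists xi, Rmin y z <= xi <= Rmax y z /\ slope f y z = f1 xi.
Proof.
  intros Hd.
  assert (W : forall y z, inI y -> inI z -> y < z ->
            exists xi, Rmin y z <= xi <= Rmax y z /\ slope f y z = f1 xi).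
  { intros y z Hy Hz Hyz.
    destruct (mean_value_I f f1 Hd y z Hy Hz Hyz) as [c [Hc E]].
    exists c. rewrite Rmin_left, Rmax_right by lra. split; [exact Hc |].
    unfold slope. rewrite E. field. lra. }
  intros y z Hy Hz Hyz. destruct (Rlt_or_le y z) as [L | L].
  - apply W; auto.
  - rewrite slope_sym, Rmin_comm, Rmax_comm. apply W; auto. lra.
Qed.

Lemma strict_deriv_I_of_C1 f f1 : (forall x, inI x -> has_deriv_I f x (f1 x)) ->
  (forall x, inI x -> continuous_in_I f1 x) -> forall c, inI c -> strict_deriv_I f c (f1 c).
Proof.
  intros Hd Hc c HcI eps Heps.
  destruct (Hc c HcI eps Heps) as [d [Hd0 K]].
  exists d; split; auto.
  intros y z Hy Hz Hyz Hyc Hzc.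
  destruct (slope_mean_value f f1 Hd y z Hy Hz Hyz) as [x [Hx ->]].
  apply K.
  - unfold inI, Rmin, Rmax in *. destruct (Rle_dec y z); lra.
  - unfold Rmin, Rmax, Rabs in *. destruct (Rle_dec y z); repeat destruct (Rcase_abs _); lra.
Qed.

Lemma strict_deriv_I_continuous f c l : inI c -> strict_deriv_I f c l -> continuous_in_I f c.
Proof.
  intros Hc H. destruct (H 1 Rlt_0_1) as [d [Hd K]].
  apply (continuous_in_I_of_slope_bound f c (Rabs l + 1) d Hd).
  intros y Hy Hne Hyc.
  assert (Hcc : Rabs (c - c) < d) by (rewrite Rminus_diag, Rabs_R0; auto).
  specialize (K c y Hc Hy (not_eq_sym Hne) Hcc Hyc).
  pose proof (Rabs_triang_inv (slope f c y) l). unfold slope in *. lra.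
Qed.

Lemma Rmult_approx m l eps : 0 < eps -> exists e, 0 < e /\
  forall a b, Rabs (a - m) < e -> Rabs (b - l) < e -> Rabs (a * b - m * l) < eps.
Proof.
  intros Heps.
  assert (Hml : 0 < Rabs m + Rabs l + 1) by (pose proof (Rabs_pos m); pose proof (Rabs_pos l); lra).
  set (e := eps / (Rabs m + Rabs l + 1)).
  assert (He : e * (Rabs m + Rabs l + 1) = eps) by (unfold e; field; lra).
  exists (Rmin 1 e); split.
  { apply Rmin_glb_lt; [lra | apply Rdiv_lt_0_compat; lra]. }
  intros a b Ha Hb.
  assert (Ha1 := Rabs_lt_Rmin_l _ _ _ Ha). assert (Ha2 := Rabs_lt_Rmin_r _ _ _ Ha).
  assert (Hb2 := Rabs_lt_Rmin_r _ _ _ Hb).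
  replace (a * b - m * l) with ((a - m) * (b - l) + (a - m) * l + m * (b - l)) by ring.
  pose proof (Rabs_pos (a - m)). pose proof (Rabs_pos (b - l)).
  pose proof (Rabs_pos m). pose proof (Rabs_pos l).
  eapply Rle_lt_trans; [apply Rabs_triang |].
  eapply Rle_lt_trans; [apply Rplus_le_compat_r, Rabs_triang |].
  rewrite !Rabs_mult. nra.
Qed.

Lemma strict_deriv_I_comp f g c l l' : inI c -> maps_I f ->
  (forall y z, inI y -> inI z -> y <> z -> f y <> f z) ->
  strict_deriv_I f c l -> strict_deriv_I g (f c) l' ->
  strict_deriv_I (fun x => g (f x)) c (l' * l).
Proof.
  intros Hc Hf Hinj Df Dg eps Heps.
  destruct (Rmult_approx l' l eps Heps) as [e [He Hmul]].
  destruct (Df e He) as [df [Hdf Kf]].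
  destruct (Dg e He) as [dg [Hdg Kg]].
  destruct (strict_deriv_I_continuous f c l Hc Df dg Hdg) as [dc [Hdc Kc]].
  exists (Rmin df dc); split; [apply Rmin_glb_lt; auto |].
  intros y z Hy Hz Hyz Hyc Hzc.
  rewrite slope_comp by auto.
  apply Hmul.
  - apply Kg; auto.
    + apply Kc; auto. exact (Rabs_lt_Rmin_r _ _ _ Hyc).
    + apply Kc; auto. exact (Rabs_lt_Rmin_r _ _ _ Hzc).
  - apply Kf; auto; eapply Rabs_lt_Rmin_l; eauto.
Qed.

(** * Bounded distortion *)

Lemma C2_on_I_deriv phi : C2_on_I phi -> exists phi1,
  (forall x, inI x -> has_deriv_I phi x (phi1 x)) /\
  (forall x, inI x -> continuous_in_I phi1 x) /\
  exists M, 0 <= M /\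
    forall x y, inI x -> inI y -> Rabs (phi1 x - phi1 y) <= M * Rabs (x - y).
Proof.
  intros [f1 [f2 [H1 [H2 H3]]]].
  exists f1. split; [auto |]. split.
  { intros x Hx. eapply has_deriv_I_continuous, H2, Hx. }
  destruct (continuous_I_bounded f2) as [M HM].
  { intros x Hx eps Heps. destruct (filterlim_within_eps _ _ _ _ (H3 x Hx) eps Heps) as [d [Hd K]].
    exists d; split; auto. }
  exists M. split.
  { eapply Rle_trans; [apply Rabs_pos | apply (HM 0)]. unfold inI; lra. }
  intros x y Hx Hy.
  destruct (Req_dec x y) as [-> | Hne].
  { rewrite !Rminus_diag, Rabs_R0. pose proof (HM 0). lra. }
  destruct (slope_mean_value f1 f2 H2 x y Hx Hy Hne) as [c [Hc E]].
  unfold slope in E.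
  replace (f1 x - f1 y) with (f2 c * (x - y)) by (rewrite <- E; field; lra).
  rewrite Rabs_mult. apply Rmult_le_compat_r; [apply Rabs_pos |].
  apply HM. unfold inI, Rmin, Rmax in *. destruct (Rle_dec x y); lra.
Qed.

Lemma incr_on_I_le f x y : incr_on_I f -> inI x -> inI y -> x <= y -> f x <= f y.
Proof. intros I Hx Hy [Lt | ->]; [left; apply I; auto | lra]. Qed.

Lemma incr_on_I_inj f : incr_on_I f ->
  forall y z, inI y -> inI z -> y <> z -> f y <> f z.
Proof.
  intros I y z Hy Hz Hyz E. destruct (Rtotal_order y z) as [L | [L | L]].
  - specialize (I y z Hy Hz L); lra.
  - auto.
  - specialize (I z y Hz Hy L); lra.
Qed.

Lemma slope_pos_of_incr f : incr_on_I f ->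
  forall y z, inI y -> inI z -> y <> z -> 0 < slope f y z.
Proof.
  intros I.
  assert (W : forall y z, inI y -> inI z -> y < z -> 0 < slope f y z).
  { intros y z Hy Hz L. specialize (I y z Hy Hz L). apply Rdiv_lt_0_compat; lra. }
  intros y z Hy Hz Hyz. destruct (Rlt_or_le y z) as [L | L].
  - apply W; auto.
  - rewrite slope_sym. apply W; auto. lra.
Qed.

Lemma strict_deriv_I_pos_of_inverse phi psi x l l' : inI x ->
  inverse_on_I phi psi -> incr_on_I phi ->
  strict_deriv_I phi x l -> strict_deriv_I psi (phi x) l' -> 0 < l.
Proof.
  intros Hx [Pphi [_ [Epsi _]]] I D D'.
  assert (Hl'l : l' * l = 1).
  { apply (strict_deriv_I_unique (fun t => t) x); [exact Hx | | apply strict_deriv_I_id].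
    apply (strict_deriv_I_ext (fun t => psi (phi t))); [exact Epsi |].
    apply strict_deriv_I_comp; auto. apply incr_on_I_inj; auto. }
  destruct (Rlt_or_le 0 l) as [P | N]; [exact P | exfalso].
  destruct (Req_dec l 0) as [Z | Nz]; [rewrite Z in Hl'l; lra |].
  destruct (D (- l)) as [d [Hd K]]; [lra |].
  destruct (exists_near_in_I x d Hx Hd) as [y [Hy [Hyx Hyd]]].
  assert (Hxx : Rabs (x - x) < d) by (rewrite Rminus_diag, Rabs_R0; auto).
  specialize (K x y Hx Hy (not_eq_sym Hyx) Hxx Hyd).
  pose proof (slope_pos_of_incr phi I x y Hx Hy (not_eq_sym Hyx)).
  pose proof (Rle_abs (slope phi x y - l)). lra.
Qed.

Definition bounded_distortion (f : R -> R) (L : R) : Prop :=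
  forall c d y z y' z', inI c -> inI d ->
    c <= y <= d -> c <= z <= d -> c <= y' <= d -> c <= z' <= d ->
    y <> z -> y' <> z' -> slope f y z <= slope f y' z' * exp (L * (d - c)).

(* The derivative is Lipschitz (constant [M]) and bounded below by [m > 0],
   so [phi' xi <= phi' xi' + M (d - c) <= phi' xi' exp (M / m (d - c))]. *)
Lemma bounded_distortion_of_C2 phi psi :
  inverse_on_I phi psi -> C2_on_I phi -> C2_on_I psi -> incr_on_I phi ->
  exists L, 0 <= L /\ bounded_distortion phi L.
Proof.
  intros Hinv Cphi Cpsi I.
  destruct (C2_on_I_deriv phi Cphi) as [f1 [D1 [K1 [M [HM LM]]]]].
  destruct (C2_on_I_deriv psi Cpsi) as [g1 [D2 [K2 _]]].
  assert (P1 : forall x, inI x -> 0 < f1 x).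
  { intros x Hx. pose proof Hinv as [Pphi _].
    apply (strict_deriv_I_pos_of_inverse phi psi x (f1 x) (g1 (phi x))); auto;
      apply strict_deriv_I_of_C1; auto. }
  destruct (continuous_I_attains_min f1 K1) as [x0 [Hx0 Hmin]].
  set (m := f1 x0). assert (Hm : 0 < m) by (apply P1; auto).
  exists (M / m). split; [apply Rmult_le_pos; [auto | apply Rlt_le, Rinv_0_lt_compat; auto] |].
  intros c d y z y' z' Hc Hd Hy Hz Hy' Hz' Hyz Hyz'.
  assert (IN : forall t, c <= t <= d -> inI t) by (intros t Ht; unfold inI in *; lra).
  destruct (slope_mean_value phi f1 D1 y z (IN y Hy) (IN z Hz) Hyz) as [xi [Hxi ->]].
  destruct (slope_mean_value phi f1 D1 y' z' (IN y' Hy') (IN z' Hz') Hyz') as [xi' [Hxi' ->]].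
  assert (Bx : c <= xi <= d) by (unfold Rmin, Rmax in *; destruct (Rle_dec y z); lra).
  assert (Bx' : c <= xi' <= d) by (unfold Rmin, Rmax in *; destruct (Rle_dec y' z'); lra).
  assert (Hf : f1 xi <= f1 xi' + M * (d - c)).
  { pose proof (LM xi xi' (IN xi Bx) (IN xi' Bx')).
    assert (Rabs (xi - xi') <= d - c) by (unfold Rabs; destruct (Rcase_abs _); lra).
    assert (M * Rabs (xi - xi') <= M * (d - c)) by (apply Rmult_le_compat_l; auto).
    pose proof (Rle_abs (f1 xi - f1 xi')). lra. }
  assert (Hmi : m <= f1 xi') by (apply Hmin, IN, Bx').
  pose proof (exp_ineq1_le (M / m * (d - c))).
  assert (M * (d - c) <= f1 xi' * (M / m * (d - c))).
  { replace (f1 xi' * (M / m * (d - c))) with (f1 xi' / m * (M * (d - c))) by (field; lra).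
    rewrite <- (Rmult_1_l (M * (d - c))) at 1.
    apply Rmult_le_compat_r; [apply Rmult_le_pos; lra |].
    apply (Rmult_le_reg_r m); [auto |]. replace (f1 xi' / m * m) with (f1 xi') by (field; lra). lra. }
  apply Rle_trans with (f1 xi' * (1 + M / m * (d - c))); [lra |].
  apply Rmult_le_compat_l; [| auto]. pose proof (P1 xi' (IN xi' Bx')); lra.
Qed.

Lemma bounded_distortion_slope_le f L : bounded_distortion f L -> maps_I f ->
  forall y z, inI y -> inI z -> y <> z -> slope f y z <= exp L.
Proof.
  intros D P y z Hy Hz Hyz.
  assert (I0 : inI 0) by (unfold inI; lra). assert (I1 : inI 1) by (unfold inI; lra).
  assert (A : slope f y z <= slope f 0 1 * exp (L * (1 - 0))).
  { apply D; unfold inI in *; lra. }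
  replace (L * (1 - 0)) with L in A by ring.
  assert (B : slope f 0 1 <= 1).
  { unfold slope. pose proof (P 0 I0). pose proof (P 1 I1). unfold inI in *.
    replace ((f 1 - f 0) / (1 - 0)) with (f 1 - f 0) by field. lra. }
  pose proof (exp_pos L).
  apply Rle_trans with (slope f 0 1 * exp L); auto.
  rewrite <- (Rmult_1_l (exp L)) at 2. apply Rmult_le_compat_r; lra.
Qed.

Lemma bounded_distortion_continuous f L : bounded_distortion f L -> maps_I f -> incr_on_I f ->
  forall x, inI x -> continuous_in_I f x.
Proof.
  intros D P I x Hx.
  apply (continuous_in_I_of_slope_bound f x (exp L) 1 Rlt_0_1).
  intros y Hy Hne _.
  pose proof (bounded_distortion_slope_le f L D P x y Hx Hy (not_eq_sym Hne)).
  pose proof (slope_pos_of_incr f I x y Hx Hy (not_eq_sym Hne)).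
  unfold slope in *. rewrite Rabs_right; lra.
Qed.

Lemma bounded_distortion_comp phi psi L1 L2 :
  bounded_distortion phi L1 -> bounded_distortion psi L2 -> 0 <= L2 ->
  incr_on_I phi -> maps_I phi -> incr_on_I psi ->
  bounded_distortion (fun x => psi (phi x)) (L1 + L2 * exp L1).
Proof.
  intros D1 D2 HL2 Ip Pp Is c d y z y' z' Hc Hd Hy Hz Hy' Hz' Hyz Hyz'.
  assert (IN : forall t, c <= t <= d -> inI t) by (intros t Ht; unfold inI in *; lra).
  assert (Hinj := incr_on_I_inj phi Ip).
  assert (Mono : forall t, c <= t <= d -> phi c <= phi t <= phi d).
  { intros t Ht. split; apply incr_on_I_le; auto; try apply IN; lra. }
  assert (Hlen : phi d - phi c <= exp L1 * (d - c)).
  { destruct (Req_dec c d) as [-> | N]; [rewrite !Rminus_diag; lra |].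
    assert (Q := bounded_distortion_slope_le phi L1 D1 Pp c d Hc Hd N). unfold slope in Q.
    apply (Rmult_le_compat_r (d - c)) in Q; [| lra].
    replace ((phi d - phi c) / (d - c) * (d - c)) with (phi d - phi c) in Q by (field; lra).
    lra. }
  rewrite (slope_comp phi psi y z), (slope_comp phi psi y' z')
    by (auto; apply Hinj; auto; apply IN; auto).
  assert (A1 : slope psi (phi y) (phi z) <= slope psi (phi y') (phi z') * exp (L2 * (phi d - phi c))).
  { apply D2; auto; try apply Mono; auto; apply Hinj; auto; apply IN; auto. }
  assert (A2 : slope phi y z <= slope phi y' z' * exp (L1 * (d - c))) by (apply D1; auto).
  assert (A3 : exp (L2 * (phi d - phi c)) <= exp (L2 * exp L1 * (d - c))).
  { rewrite Rmult_assoc. apply exp_le_compat, Rmult_le_compat_l; auto. }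
  assert (P3 := slope_pos_of_incr psi Is (phi y') (phi z') (Pp y' (IN y' Hy')) (Pp z' (IN z' Hz'))
                  (Hinj y' z' (IN y' Hy') (IN z' Hz') Hyz')).
  assert (P4 := slope_pos_of_incr phi Ip y' z' (IN y' Hy') (IN z' Hz') Hyz').
  pose proof (slope_pos_of_incr psi Is (phi y) (phi z) (Pp y (IN y Hy)) (Pp z (IN z Hz))
                (Hinj y z (IN y Hy) (IN z Hz) Hyz)).
  pose proof (slope_pos_of_incr phi Ip y z (IN y Hy) (IN z Hz) Hyz).
  pose proof (exp_pos (L2 * (phi d - phi c))). pose proof (exp_pos (L1 * (d - c))).
  replace ((L1 + L2 * exp L1) * (d - c)) with (L2 * exp L1 * (d - c) + L1 * (d - c)) by ring.
  rewrite exp_plus.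
  apply Rle_trans with (slope psi (phi y') (phi z') * exp (L2 * (phi d - phi c))
                        * (slope phi y' z' * exp (L1 * (d - c)))).
  { apply Rmult_le_compat; lra. }
  apply Rle_trans with (slope psi (phi y') (phi z') * exp (L2 * exp L1 * (d - c))
                        * (slope phi y' z' * exp (L1 * (d - c)))); [| right; ring].
  apply Rmult_le_compat_r; [apply Rmult_le_pos; lra |]. apply Rmult_le_compat_l; lra.
Qed.

Lemma fiter_maps_I f : maps_I f -> forall k, maps_I (fiter k f).
Proof. intros H k; induction k; intros x Hx; simpl; auto. Qed.

Lemma fiter_incr f : incr_on_I f -> maps_I f -> forall k, incr_on_I (fiter k f).
Proof.
  intros H P k; induction k; intros x y Hx Hy Hxy; simpl; auto.
  apply H; try apply fiter_maps_I; auto.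
Qed.

Lemma fiter_succ_r f k x : fiter (S k) f x = fiter k f (f x).
Proof. revert x; induction k; intros x; simpl; auto. simpl in IHk. rewrite <- IHk. auto. Qed.

Lemma fiter_fixed f y : f y = y -> forall k, fiter k f y = y.
Proof. intros E k; induction k; simpl; auto. rewrite IHk; auto. Qed.

Lemma bounded_distortion_fiter f L : bounded_distortion f L -> 0 <= L ->
  incr_on_I f -> maps_I f -> forall k, exists L', 0 <= L' /\ bounded_distortion (fiter k f) L'.
Proof.
  intros D HL I P k. induction k as [| k [L' [HL' D']]].
  - exists 0. split; [lra |]. intros c d y z y' z' _ _ _ _ _ _ Hyz Hyz'.
    unfold slope; simpl. rewrite Rmult_0_l, exp_0.
    replace ((z - y) / (z - y)) with 1 by (field; lra).
    replace ((z' - y') / (z' - y')) with 1 by (field; lra). lra.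
  - exists (L' + L * exp L'). split.
    { pose proof (exp_pos L'). pose proof (Rmult_le_pos L (exp L') HL ltac:(lra)). lra. }
    exact (bounded_distortion_comp (fiter k f) f L' L D' D HL (fiter_incr f I P k) (fiter_maps_I f P k) I).
Qed.

(** * Kopell's lemma *)

Lemma incr_maps_interval phi a b : incr_on_I phi -> inI a -> inI b ->
  phi a = a -> phi b = b -> forall y, a < y < b -> a < phi y < b.
Proof.
  intros I Ia Ib Fa Fb y Hy. assert (inI y) by (unfold inI in *; lra).
  split; [rewrite <- Fa at 1 | rewrite <- Fb at 1]; apply I; auto; lra.
Qed.

Lemma Bernoulli_ineq e n : 0 <= e <= 1 -> 1 - INR n * e <= (1 - e) ^ n.
Proof.
  intros He. induction n as [| n IH]; [simpl; lra |].
  rewrite S_INR. simpl.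
  assert (0 <= INR n) by apply pos_INR.
  assert (0 <= INR n * e * e) by (apply Rmult_le_pos; [apply Rmult_le_pos |]; lra).
  assert ((1 - e) * (1 - INR n * e) <= (1 - e) * (1 - e) ^ n) by (apply Rmult_le_compat_l; lra).
  nra.
Qed.

Lemma gap_ratio_pow_le (t : nat -> R) r : 0 <= r -> (forall i, t (S i) <> t i) ->
  (forall i, r <= (t (S (S i)) - t (S i)) / (t (S i) - t i)) ->
  forall j, r ^ j <= (t (S j) - t j) / (t 1%nat - t 0%nat).
Proof.
  intros Hr Hne Hratio j. induction j as [| j IH].
  - simpl. right. field. apply Rminus_eq_contra, Hne.
  - replace ((t (S (S j)) - t (S j)) / (t 1%nat - t 0%nat)) with
      ((t (S (S j)) - t (S j)) / (t (S j) - t j) * ((t (S j) - t j) / (t 1%nat - t 0%nat)))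
      by (field; split; apply Rminus_eq_contra, Hne).
    simpl. apply Rmult_le_compat; [lra | apply pow_le, Hr | apply Hratio | exact IH].
Qed.

Lemma bounded_seq_small_step (s : nat -> R) c d kap : 0 < kap -> s 1%nat <> s 0%nat ->
  (forall j, c < s j < d) -> exists j, (s (S j) - s j) / (s 1%nat - s 0%nat) < kap.
Proof.
  intros Hkap Hne Hb. apply NNPP. intros Hnone.
  set (D0 := s 1%nat - s 0%nat).
  assert (HD0 : 0 < Rabs D0) by (apply Rabs_pos_lt; unfold D0; lra).
  assert (Drift : forall N, INR N * kap <= (s N - s 0%nat) / D0).
  { induction N as [| N IH]; [unfold Rdiv; simpl; rewrite Rminus_diag; lra |].
    assert (kap <= (s (S N) - s N) / D0).
    { apply Rnot_lt_le. intros Hlt. apply Hnone. exists N. exact Hlt. }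
    replace ((s (S N) - s 0%nat) / D0) with ((s N - s 0%nat) / D0 + (s (S N) - s N) / D0)
      by (field; unfold D0; lra).
    rewrite S_INR. lra. }
  destruct (INR_archimed (kap * Rabs D0) (d - c)) as [N HN].
  { apply Rmult_lt_0_compat; auto. }
  specialize (Drift N).
  assert (Bn : Rabs (s N - s 0%nat) < d - c).
  { pose proof (Hb N). pose proof (Hb 0%nat). unfold Rabs; destruct (Rcase_abs _); lra. }
  replace (s N - s 0%nat) with (D0 * ((s N - s 0%nat) / D0)) in Bn by (field; unfold D0; lra).
  rewrite Rabs_mult in Bn.
  pose proof (Rle_abs ((s N - s 0%nat) / D0)).
  assert (Rabs D0 * (INR N * kap) <= Rabs D0 * Rabs ((s N - s 0%nat) / D0))
    by (apply Rmult_le_compat_l; lra).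
  nra.
Qed.

Lemma gap_ratio_pullback F y0 y1 z0 z1 K r : y0 <> y1 -> z0 <> z1 ->
  0 < slope F y0 y1 -> 0 < slope F z0 z1 -> slope F z0 z1 <= K * slope F y0 y1 ->
  0 < r -> r <= (F z1 - F z0) / (F y1 - F y0) -> r <= K * ((z1 - z0) / (y1 - y0)).
Proof.
  intros Hy Hz Py Pz Hslope Hr Hgap.
  set (sig := (z1 - z0) / (y1 - y0)).
  assert (E : (F z1 - F z0) / (F y1 - F y0) = slope F z0 z1 / slope F y0 y1 * sig).
  { unfold sig, slope in *. field.
    split; [| split]; try lra. intros Z. rewrite Z in Py. unfold Rdiv in Py. lra. }
  rewrite E in Hgap.
  assert (Hq : slope F z0 z1 / slope F y0 y1 <= K).
  { apply Rmult_le_reg_r with (slope F y0 y1); auto. field_simplify; lra. }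
  assert (Hsig : 0 < sig).
  { pose proof (Rdiv_lt_0_compat _ _ Pz Py). nra. }
  eapply Rle_trans; [exact Hgap | apply Rmult_le_compat_r; lra].
Qed.

Section Kopell.

Variables (H : R -> R) (L a b : R).
Hypotheses (a_inI : inI a) (b_inI : inI b)
  (H_incr : incr_on_I H) (H_maps : maps_I H) (H_dist : bounded_distortion H L) (L_ge0 : 0 <= L)
  (H_below : forall y, a < y < b -> a < H y < y).

Lemma inI_of_between y : a < y < b -> inI y.
Proof. unfold inI in *; lra. Qed.

Lemma fiter_H_bounds k y : a < y < b -> a < fiter k H y <= y.
Proof.
  intros Hy. induction k as [| k IH]; simpl; [lra |].
  pose proof (H_below (fiter k H y) ltac:(lra)). lra.
Qed.

Lemma fiter_H_tends_to_a y : a < y < b ->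
  forall eps, 0 < eps -> exists k, fiter k H y < a + eps.
Proof.
  intros Hy eps Heps.
  set (U := fun n => fiter n H y).
  assert (Bnd : forall n, a < U n <= y) by (intro n; apply fiter_H_bounds, Hy).
  assert (Dec : Un_decreasing U).
  { intros n. pose proof (Bnd n). pose proof (H_below (U n) ltac:(lra)). unfold U in *; simpl; lra. }
  destruct (decreasing_cv U Dec) as [l Hl].
  { exists (- a). intros x [i ->]. unfold opp_seq. pose proof (Bnd i). lra. }
  assert (Hly : l <= y) by exact (decreasing_ineq U l Dec Hl 0).
  assert (Hla : a <= l).
  { apply Rnot_lt_le. intros Hlt. destruct (Hl (a - l)) as [n Hn]; [lra |].
    specialize (Hn n (le_n n)). pose proof (Bnd n).
    unfold Rdist, Rabs in Hn. destruct (Rcase_abs _) in Hn; lra. }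
  assert (Il : inI l) by (unfold inI in *; lra).
  assert (Hl_fix : H l = l).
  { assert (Hcont := continuity_clamp H
      (bounded_distortion_continuous H L H_dist H_maps H_incr)).
    assert (Cv := continuity_seq _ U l (Hcont l) Hl).
    cbv beta in Cv. rewrite (clamp_id l Il) in Cv.
    apply (UL_sequence _ _ _ Cv).
    intros e He. destruct (Hl e He) as [N HN]. exists N. intros n Hn.
    rewrite clamp_id by (pose proof (Bnd n); unfold inI in *; lra).
    apply (HN (S n)). lia. }
  assert (Hl_a : l = a).
  { destruct (Rle_lt_or_eq_dec a l Hla) as [Lt | Eq]; [| auto].
    pose proof (H_below l ltac:(lra)). lra. }
  destruct (Hl eps Heps) as [n Hn]. exists n. specialize (Hn n (le_n n)).
  rewrite Hl_a in Hn. unfold Rdist, Rabs, U in Hn. destruct (Rcase_abs _) in Hn; lra.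
Qed.

Lemma fiter_H_fundamental_domain p q : a < q < p -> p < b ->
  exists i, fiter (S i) H p < q <= fiter i H p.
Proof.
  intros Hq Hp.
  assert (G : forall n, fiter n H p < q -> exists i, fiter (S i) H p < q <= fiter i H p).
  { induction n as [| n IH]; intros Hn; simpl in Hn; [lra |].
    destruct (Rlt_or_le (fiter n H p) q) as [Lt | Le]; [apply IH; auto | exists n; simpl; lra]. }
  destruct (fiter_H_tends_to_a p ltac:(lra) (q - a)) as [n Hn]; [lra |].
  apply (G n). lra.
Qed.

(* [H^k] maps [[H d, d]] onto [[H^(k+1) d, H^k d]]; these intervals are disjoint,
   so the distortions of the successive factors of [H^k] add up to at most
   [L (d - H^k d)]. *)
Lemma fiter_H_distortion d k y z y' z' : a < d < b ->
  H d <= y <= d -> H d <= z <= d -> H d <= y' <= d -> H d <= z' <= d -> y <> z -> y' <> z' ->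
  slope (fiter k H) y z <= slope (fiter k H) y' z' * exp (L * (d - fiter k H d)).
Proof.
  intros Hd. revert y z y' z'. induction k as [| k IH]; intros y z y' z' Hy Hz Hy' Hz' Hyz Hyz'.
  - unfold slope; simpl. rewrite Rminus_diag, Rmult_0_r, exp_0.
    replace ((z - y) / (z - y)) with 1 by (field; lra).
    replace ((z' - y') / (z' - y')) with 1 by (field; lra). lra.
  - pose proof (H_below d Hd) as Hdd.
    assert (IN : forall t, H d <= t <= d -> inI t) by (intros t Ht; unfold inI in *; lra).
    assert (Ik := fiter_incr H H_incr H_maps k). assert (Pk := fiter_maps_I H H_maps k).
    assert (Hinj := incr_on_I_inj _ Ik).
    assert (Mono : forall t, H d <= t <= d -> fiter (S k) H d <= fiter k H t <= fiter k H d).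
    { intros t Ht. rewrite fiter_succ_r. split; apply incr_on_I_le; auto; try apply IN; lra. }
    assert (E : forall u v, H d <= u <= d -> H d <= v <= d -> u <> v ->
       slope (fiter (S k) H) u v = slope H (fiter k H u) (fiter k H v) * slope (fiter k H) u v).
    { intros u v Hu Hv Huv. apply (slope_comp (fiter k H) H); auto. }
    rewrite (E y z Hy Hz Hyz), (E y' z' Hy' Hz' Hyz').
    assert (A1 := H_dist (fiter (S k) H d) (fiter k H d) (fiter k H y) (fiter k H z)
                  (fiter k H y') (fiter k H z')
                  (fiter_maps_I H H_maps (S k) d (IN d ltac:(lra))) (Pk d (IN d ltac:(lra)))
                  (Mono y Hy) (Mono z Hz) (Mono y' Hy') (Mono z' Hz')
                  (Hinj y z (IN y Hy) (IN z Hz) Hyz) (Hinj y' z' (IN y' Hy') (IN z' Hz') Hyz')).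
    assert (A2 := IH y z y' z' Hy Hz Hy' Hz' Hyz Hyz').
    pose proof (slope_pos_of_incr H H_incr _ _ (Pk y (IN y Hy)) (Pk z (IN z Hz))
                  (Hinj y z (IN y Hy) (IN z Hz) Hyz)).
    pose proof (slope_pos_of_incr _ Ik y z (IN y Hy) (IN z Hz) Hyz).
    pose proof (slope_pos_of_incr H H_incr _ _ (Pk y' (IN y' Hy')) (Pk z' (IN z' Hz'))
                  (Hinj y' z' (IN y' Hy') (IN z' Hz') Hyz')).
    pose proof (slope_pos_of_incr _ Ik y' z' (IN y' Hy') (IN z' Hz') Hyz').
    pose proof (exp_pos (L * (fiter k H d - fiter (S k) H d))).
    pose proof (exp_pos (L * (d - fiter k H d))).
    replace (L * (d - fiter (S k) H d)) with
      (L * (fiter k H d - fiter (S k) H d) + L * (d - fiter k H d)) by ring.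
    rewrite exp_plus.
    eapply Rle_trans; [apply Rmult_le_compat; [lra | lra | exact A1 | exact A2] | right; ring].
Qed.

Lemma fiter_H_slope_ratio_le d k y z y' z' : a < d < b ->
  H d <= y <= d -> H d <= z <= d -> H d <= y' <= d -> H d <= z' <= d -> y <> z -> y' <> z' ->
  slope (fiter k H) y z <= exp L * slope (fiter k H) y' z'.
Proof.
  intros Hd Hy Hz Hy' Hz' Hyz Hyz'.
  assert (IN : forall t, H d <= t <= d -> inI t).
  { intros t Ht. pose proof (H_below d Hd). unfold inI in *; lra. }
  pose proof (slope_pos_of_incr _ (fiter_incr H H_incr H_maps k) y' z' (IN y' Hy') (IN z' Hz') Hyz').
  eapply Rle_trans; [apply (fiter_H_distortion d k y z y' z'); auto |].
  rewrite Rmult_comm. apply Rmult_le_compat_r; [lra |].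
  apply exp_le_compat. rewrite <- (Rmult_1_r L) at 2. apply Rmult_le_compat_l; [lra |].
  pose proof (fiter_H_bounds k d Hd). pose proof (H_below d Hd). unfold inI in *; lra.
Qed.

Variables (W : R -> R) (lam p : R).
Hypotheses (W_incr : incr_on_I W) (W_fix_a : W a = a) (W_fix_b : W b = b)
  (W_comm : forall y, a < y < b -> W (H y) = H (W y))
  (W_deriv : strict_deriv_I W a lam) (p_between : a < p < b) (W_fix_p : W p = p).

Lemma W_comm_fiter k y : a < y < b -> W (fiter k H y) = fiter k H (W y).
Proof.
  intros Hy. induction k as [| k IH]; simpl; auto.
  pose proof (fiter_H_bounds k y Hy). rewrite W_comm by lra. rewrite IH; auto.
Qed.

Lemma W_fix_fiter_p k : W (fiter k H p) = fiter k H p.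
Proof. rewrite W_comm_fiter, W_fix_p; auto. Qed.

(* [W] fixes the points [H^k p], which accumulate at [a]. *)
Lemma strict_deriv_W_a_eq_1 : lam = 1.
Proof.
  destruct (Req_dec lam 1) as [E | Hne]; [exact E | exfalso].
  assert (Hpos : 0 < Rabs (lam - 1)) by (apply Rabs_pos_lt; lra).
  destruct (W_deriv _ Hpos) as [d [Hd K]].
  destruct (fiter_H_tends_to_a p p_between d Hd) as [k Hk].
  pose proof (fiter_H_bounds k p p_between) as Bz.
  pose proof (H_below (fiter k H p) ltac:(lra)) as Hyz.
  change (H (fiter k H p)) with (fiter (S k) H p) in Hyz.
  specialize (K (fiter (S k) H p) (fiter k H p)
    ltac:(apply inI_of_between; lra) ltac:(apply inI_of_between; lra) ltac:(lra)
    ltac:(rewrite Rabs_right; lra) ltac:(rewrite Rabs_right; lra)).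
  unfold slope in K. rewrite !W_fix_fiter_p in K.
  replace ((fiter k H p - fiter (S k) H p) / (fiter k H p - fiter (S k) H p)) with 1 in K
    by (field; lra).
  rewrite <- Rabs_Ropp in K. replace (- (1 - lam)) with (lam - 1) in K by ring. lra.
Qed.

Lemma W_orbit_near_a_gap_ratio eps : 0 < eps <= 1 -> exists del, 0 < del /\
  forall t0, (forall i, a < fiter i W t0 < a + del) -> W t0 <> t0 ->
  forall j, (1 - eps) ^ j <= (fiter (S j) W t0 - fiter j W t0) / (fiter 1 W t0 - fiter 0 W t0).
Proof.
  intros Heps. destruct (W_deriv eps ltac:(lra)) as [del [Hdel K]].
  rewrite strict_deriv_W_a_eq_1 in K.
  exists (Rmin del (b - a)); split; [apply Rmin_glb_lt; lra |]. intros t0 Ht Hne.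
  pose proof (Rmin_l del (b - a)). pose proof (Rmin_r del (b - a)).
  assert (IN : forall i, inI (fiter i W t0)) by (intro i; pose proof (Ht i); unfold inI in *; lra).
  assert (Step : forall i, fiter (S i) W t0 <> fiter i W t0).
  { induction i as [| i IH]; [exact Hne |].
    apply (incr_on_I_inj W W_incr); [apply (IN (S i)) | apply IN | exact IH]. }
  apply (gap_ratio_pow_le (fun i => fiter i W t0)); [lra | exact Step |]. intros i.
  assert (Ai : Rabs (fiter i W t0 - a) < del) by (pose proof (Ht i); rewrite Rabs_right; lra).
  assert (Ai' : Rabs (fiter (S i) W t0 - a) < del)
    by (pose proof (Ht (S i)); rewrite Rabs_right; lra).
  specialize (K _ _ (IN i) (IN (S i)) (not_eq_sym (Step i)) Ai Ai').
  unfold slope in K. pose proof (Rabs_def2 _ _ K). simpl in *. lra.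
Qed.

(* Pushing the orbit of [q] towards [a] with [H^k] makes its successive gaps
   almost equal, because [W' a = 1]; the bounded distortion of [H^k] on the
   fundamental domain [[H d, d]] transfers this back to the orbit of [q]. *)
Lemma W_orbit_gap_lower_bound d q : a < d < b -> W d = d -> W (H d) = H d ->
  H d < q < d -> W q <> q ->
  forall j, exp (- L) / 2 <= (fiter (S j) W q - fiter j W q) / (fiter 1 W q - fiter 0 W q).
Proof.
  intros Hd Wd WHd Hq Nq j.
  pose proof (H_below d Hd) as Hdd.
  assert (Sb : forall i, H d < fiter i W q < d).
  { induction i as [| i IH]; [exact Hq |].
    apply (incr_maps_interval W (H d) d); auto; apply inI_of_between; lra. }
  assert (IN : forall i, inI (fiter i W q)) by (intro i; apply inI_of_between; pose proof (Sb i); lra).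
  assert (Sne : forall i, fiter (S i) W q <> fiter i W q).
  { induction i as [| i IH]; [exact Nq |].
    apply (incr_on_I_inj W W_incr); [apply (IN (S i)) | apply IN | exact IH]. }
  set (eps := 1 / (2 * (INR j + 1))).
  pose proof (pos_INR j).
  assert (Heps : 0 < eps <= 1 / 2).
  { unfold eps. split; [apply Rdiv_lt_0_compat; lra |].
    apply Rmult_le_reg_r with (2 * (INR j + 1)); [lra |]. field_simplify; lra. }
  assert (Hje : INR j * eps <= 1 / 2).
  { unfold eps. apply Rmult_le_reg_r with (2 * (INR j + 1)); [lra |]. field_simplify; lra. }
  destruct (W_orbit_near_a_gap_ratio eps ltac:(lra)) as [del [Hdel Near]].
  destruct (fiter_H_tends_to_a d Hd del Hdel) as [k Hk].
  assert (Ik := fiter_incr H H_incr H_maps k).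
  assert (Orbit : forall i, fiter i W (fiter k H q) = fiter k H (fiter i W q)).
  { induction i as [| i IH]; [reflexivity |].
    simpl. rewrite IH. apply W_comm_fiter. pose proof (Sb i); lra. }
  assert (Half : 1 / 2 <= (fiter k H (fiter (S j) W q) - fiter k H (fiter j W q))
                         / (fiter k H (fiter 1 W q) - fiter k H (fiter 0 W q))).
  { rewrite <- !Orbit. eapply Rle_trans; [| apply Near].
    - eapply Rle_trans; [| apply Bernoulli_ineq]; lra.
    - intros i. rewrite Orbit. split.
      + pose proof (fiter_H_bounds k (fiter i W q)). pose proof (Sb i). lra.
      + eapply Rle_lt_trans; [| exact Hk].
        apply incr_on_I_le; auto; [apply inI_of_between; lra |]. pose proof (Sb i); lra.
    - rewrite W_comm_fiter by lra.
      apply (incr_on_I_inj _ Ik); [apply (IN 1%nat) | apply (IN 0%nat) | exact Nq]. }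
  assert (Sl : forall i, 0 < slope (fiter k H) (fiter i W q) (fiter (S i) W q)).
  { intros i. apply slope_pos_of_incr; [exact Ik | apply IN | apply (IN (S i)) | apply not_eq_sym, Sne]. }
  assert (Ratio : 1 / 2 <= exp L * ((fiter (S j) W q - fiter j W q) / (fiter 1 W q - fiter 0 W q))).
  { apply (gap_ratio_pullback (fiter k H));
      [apply not_eq_sym, Sne | apply not_eq_sym, Sne | apply (Sl 0%nat) | apply Sl | | lra | exact Half].
    pose proof (Sb j). pose proof (Sb (S j)). pose proof (Sb 0%nat). pose proof (Sb 1%nat).
    apply (fiter_H_slope_ratio_le d); auto; try lra; apply not_eq_sym, Sne. }
  pose proof (exp_pos L). rewrite exp_Ropp.
  apply Rmult_le_reg_l with (exp L); auto.
  replace (exp L * (/ exp L / 2)) with (1 / 2) by (field; lra). exact Ratio.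
Qed.

Theorem kopell_identity y : a < y < b -> W y = y.
Proof.
  intros Hy. destruct (Req_dec (W y) y) as [E | Ny]; [exact E | exfalso].
  destruct (fiter_H_tends_to_a y Hy (p - a)) as [k0 Hk0]; [lra |].
  pose proof (fiter_H_bounds k0 y Hy) as Bq.
  set (q := fiter k0 H y) in *.
  assert (Nq : W q <> q).
  { unfold q. rewrite W_comm_fiter by exact Hy.
    apply (incr_on_I_inj _ (fiter_incr H H_incr H_maps k0)); auto; apply inI_of_between;
      [apply (incr_maps_interval W a b) |]; auto. }
  destruct (fiter_H_fundamental_domain p q ltac:(lra) ltac:(lra)) as [i [Hi1 Hi2]].
  pose proof (fiter_H_bounds i p p_between) as Bd.
  set (d := fiter i H p) in *.
  change (fiter (S i) H p) with (H d) in Hi1.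
  assert (Wd : W d = d) by apply W_fix_fiter_p.
  assert (WHd : W (H d) = H d) by apply (W_fix_fiter_p (S i)).
  assert (Hqd : q < d) by (destruct Hi2 as [Lt | Eq]; [exact Lt | rewrite Eq in Nq; contradiction]).
  destruct (bounded_seq_small_step (fun j => fiter j W q) (H d) d (exp (- L) / 2)) as [j Hj].
  - pose proof (exp_pos (- L)); lra.
  - exact Nq.
  - intros j. induction j as [| j IH]; [simpl; lra |].
    apply (incr_maps_interval W (H d) d); auto; apply inI_of_between;
      pose proof (H_below d ltac:(lra)); lra.
  - pose proof (W_orbit_gap_lower_bound d q ltac:(lra) Wd WHd ltac:(lra) Nq j). lra.
Qed.

End Kopell.

(** * Fixed points of increasing maps of I *)

Lemma inverse_on_I_sym f g : inverse_on_I f g -> inverse_on_I g f.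
Proof. intros [A1 [A2 [A3 A4]]]. split; [exact A2 | split; [exact A1 | split; [exact A4 | exact A3]]]. Qed.

Lemma inverse_on_I_incr f g : inverse_on_I f g -> incr_on_I f -> incr_on_I g.
Proof.
  intros [A1 [A2 [A3 A4]]] I x y Hx Hy Hxy.
  apply Rnot_le_lt. intros Hle.
  pose proof (incr_on_I_le f (g y) (g x) I (A2 y Hy) (A2 x Hx) Hle).
  rewrite !A4 in H by auto. lra.
Qed.

Lemma inverse_on_I_fix_endpoints f g : inverse_on_I f g -> incr_on_I f -> f 0 = 0 /\ f 1 = 1.
Proof.
  intros [A1 [A2 [A3 A4]]] I.
  assert (I0 : inI 0) by (unfold inI; lra). assert (I1 : inI 1) by (unfold inI; lra).
  pose proof (A1 0 I0). pose proof (A1 1 I1). pose proof (A2 0 I0). pose proof (A2 1 I1).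
  assert (f 0 <= f (g 0)) by (apply incr_on_I_le; auto; unfold inI in *; lra).
  assert (f (g 1) <= f 1) by (apply incr_on_I_le; auto; unfold inI in *; lra).
  rewrite A4 in * by auto. unfold inI in *. lra.
Qed.

Lemma inverse_on_I_fiter f g : inverse_on_I f g -> forall k, inverse_on_I (fiter k f) (fiter k g).
Proof.
  intros Hfg k. pose proof Hfg as [A1 [A2 [A3 A4]]].
  assert (Cancel : forall f g, maps_I f -> (forall x, inI x -> g (f x) = x) ->
            forall k x, inI x -> fiter k g (fiter k f x) = x).
  { clear. intros f g Pf Ef k. induction k as [| k IH]; intros x Hx; [reflexivity |].
    change (fiter (S k) f x) with (f (fiter k f x)). rewrite fiter_succ_r, Ef
      by (apply fiter_maps_I; auto). auto. }
  repeat split; try apply fiter_maps_I; auto.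
Qed.

Lemma commute_inverse f g F : inverse_on_I f g -> maps_I F ->
  (forall y, inI y -> f (F y) = F (f y)) -> forall y, inI y -> g (F y) = F (g y).
Proof.
  intros [A1 [A2 [A3 A4]]] PF C y Hy.
  rewrite <- (A4 y Hy) at 1. rewrite <- C by auto. rewrite A3; auto.
Qed.

Lemma fiter_lt_of_lt f : incr_on_I f -> maps_I f -> forall y, inI y -> f y < y ->
  forall k, fiter (S k) f y < y.
Proof.
  intros I P y Hy Hf k. induction k as [| k IH]; [exact Hf |].
  change (f (fiter (S k) f y) < y).
  apply Rle_lt_trans with (f y); [| exact Hf].
  apply incr_on_I_le; auto; [apply (fiter_maps_I f P (S k)); auto | lra].
Qed.

Lemma fiter_gt_of_gt f : incr_on_I f -> maps_I f -> forall y, inI y -> y < f y ->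
  forall k, y < fiter (S k) f y.
Proof.
  intros I P y Hy Hf k. induction k as [| k IH]; [exact Hf |].
  change (y < f (fiter (S k) f y)).
  apply Rlt_le_trans with (f y); [exact Hf |].
  apply incr_on_I_le; auto; [apply (fiter_maps_I f P (S k)); auto | lra].
Qed.

Lemma fixed_of_fiter_fixed f y k : incr_on_I f -> maps_I f -> inI y ->
  fiter (S k) f y = y -> f y = y.
Proof.
  intros I P Hy E.
  destruct (Rtotal_order (f y) y) as [Lt | [Eq | Gt]]; [| exact Eq |].
  - pose proof (fiter_lt_of_lt f I P y Hy Lt k). lra.
  - pose proof (fiter_gt_of_gt f I P y Hy Gt k). lra.
Qed.

Lemma inverse_on_I_conj g ginv h hinv : inverse_on_I g ginv -> inverse_on_I h hinv ->
  inverse_on_I (fun y => g (h (ginv y))) (fun y => g (hinv (ginv y))).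
Proof.
  intros [Pg [Pgi [Eg1 Eg2]]] [Ph [Phi [Eh1 Eh2]]].
  split; [| split; [| split]]; intros y Hy.
  - apply Pg, Ph, Pgi, Hy.
  - apply Pg, Phi, Pgi, Hy.
  - rewrite Eg1, Eh1, Eg2; auto.
  - rewrite Eg1, Eh2, Eg2; auto.
Qed.

Lemma fiter_conj g ginv h : inverse_on_I g ginv -> maps_I h ->
  forall k y, inI y -> fiter k (fun y => g (h (ginv y))) y = g (fiter k h (ginv y)).
Proof.
  intros [Pg [Pgi [Eg1 Eg2]]] Ph k. induction k as [| k IH]; intros y Hy; simpl.
  - rewrite Eg2; auto.
  - rewrite IH, Eg1; auto. apply fiter_maps_I; auto.
Qed.


Lemma fixed_point_between phi y1 y2 : (forall y, inI y -> continuous_in_I phi y) ->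
  inI y1 -> inI y2 -> phi y1 < y1 -> y2 < phi y2 ->
  exists z, Rmin y1 y2 <= z <= Rmax y1 y2 /\ phi z = z.
Proof.
  intros C Hy1 Hy2 L1 L2.
  set (psi := ((fun t => phi (clamp t)) - (fun t => clamp t))%F).
  assert (Cpsi : continuity psi).
  { apply continuity_minus; [exact (continuity_clamp phi C) |].
    apply (continuity_clamp (fun t => t)). intros x _ eps Heps. exists eps; split; auto. }
  assert (E : forall t, inI t -> psi t = phi t - t) by (intros t Ht; unfold psi, minus_fct; rewrite clamp_id; auto).
  assert (Hz : forall z, Rmin y1 y2 <= z <= Rmax y1 y2 -> psi z = 0 ->
            exists z, Rmin y1 y2 <= z <= Rmax y1 y2 /\ phi z = z).
  { intros z Hz Ez. exists z. split; [exact Hz |].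
    rewrite E in Ez; [lra |]. unfold inI, Rmin, Rmax in *. destruct (Rle_dec y1 y2); lra. }
  destruct (Rtotal_order y1 y2) as [Lt | [Eq | Gt]].
  - destruct (IVT psi y1 y2 Cpsi Lt) as [z [Hz1 Ez]]; try (rewrite E; auto; lra).
    apply (Hz z); [rewrite Rmin_left, Rmax_right; lra | exact Ez].
  - subst; lra.
  - destruct (IVT (- psi)%F y2 y1 (continuity_opp psi Cpsi) Gt) as [z [Hz1 Ez]];
      try (unfold opp_fct; rewrite E; auto; lra).
    apply (Hz z); [rewrite Rmin_right, Rmax_left; lra | unfold opp_fct in Ez; lra].
Qed.

Lemma fixpoint_free_sign phi a b : (forall y, inI y -> continuous_in_I phi y) ->
  inI a -> inI b -> (forall y, a < y < b -> phi y <> y) ->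
  (forall y, a < y < b -> phi y < y) \/ (forall y, a < y < b -> y < phi y).
Proof.
  intros C Ia Ib Nfix.
  assert (IN : forall y, a < y < b -> inI y) by (intros y Hy; unfold inI in *; lra).
  destruct (classic (exists y, a < y < b /\ y < phi y)) as [[y2 [Hy2 L2]] | None].
  - right. intros y Hy. destruct (Rtotal_order (phi y) y) as [Lt | [Eq | Gt]]; auto.
    + destruct (fixed_point_between phi y y2 C (IN y Hy) (IN y2 Hy2) Lt L2) as [z [Hz Ez]].
      exfalso. apply (Nfix z); [unfold Rmin, Rmax in Hz; destruct (Rle_dec y y2); lra | exact Ez].
    + exfalso. exact (Nfix y Hy Eq).
  - left. intros y Hy. destruct (Rtotal_order (phi y) y) as [Lt | [Eq | Gt]]; auto.
    + exfalso. exact (Nfix y Hy Eq).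
    + exfalso. apply None. exists y. auto.
Qed.

Lemma last_fixed_point_below phi x : (forall y, inI y -> continuous_in_I phi y) ->
  phi 0 = 0 -> inI x -> phi x <> x ->
  exists a, 0 <= a < x /\ phi a = a /\ forall y, a < y <= x -> phi y <> y.
Proof.
  intros C H0 Hx Nx.
  set (E := fun y => 0 <= y <= x /\ phi y = y).
  destruct (completeness E) as [a [Ub Lub]].
  { exists x. intros y [Hy _]. lra. }
  { exists 0. split; auto. unfold inI in *; lra. }
  assert (Ha0 : 0 <= a) by (apply Ub; split; auto; unfold inI in *; lra).
  assert (Hax : a <= x) by (apply Lub; intros y [Hy _]; lra).
  assert (Ia : inI a) by (unfold inI in *; lra).
  assert (Fa : phi a = a).
  { destruct (Req_dec (phi a) a) as [Eq | Ne]; [exact Eq | exfalso].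
    set (e := Rabs (phi a - a) / 2).
    assert (He : 0 < e) by (unfold e; pose proof (Rabs_pos_lt (phi a - a)); lra).
    destruct (C a Ia e He) as [del [Hdel K]].
    assert (Ex : exists y, E y /\ a - Rmin del e < y).
    { apply NNPP. intros N.
      assert (a <= a - Rmin del e).
      { apply Lub. intros y Ey. apply Rnot_lt_le. intros Lt. apply N. exists y. auto. }
      assert (0 < Rmin del e) by (apply Rmin_glb_lt; lra). lra. }
    destruct Ex as [y [[Hy Fy] Hye]].
    assert (Hya : y <= a) by (apply Ub; split; auto).
    pose proof (Rmin_l del e). pose proof (Rmin_r del e).
    specialize (K y ltac:(unfold inI in *; lra) ltac:(rewrite Rabs_left1; lra)).
    rewrite Fy in K.
    pose proof (Rabs_triang (phi a - y) (y - a)) as Tri.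
    replace (phi a - y + (y - a)) with (phi a - a) in Tri by ring.
    rewrite Rabs_minus_sym in K. rewrite (Rabs_left1 (y - a)) in Tri by lra.
    unfold e in *. lra. }
  exists a. split; [split; auto |]; [| split; auto].
  - destruct Hax as [Lt | Eq]; auto. subst. contradiction.
  - intros y Hy Fy. assert (y <= a) by (apply Ub; split; auto; lra). lra.
Qed.

Lemma first_fixed_point_above phi x : (forall y, inI y -> continuous_in_I phi y) ->
  phi 1 = 1 -> inI x -> phi x <> x ->
  exists b, x < b <= 1 /\ phi b = b /\ forall y, x <= y < b -> phi y <> y.
Proof.
  intros C H1 Hx Nx.
  set (rho := fun y => 1 - phi (1 - y)).
  assert (IR : forall y, inI y -> inI (1 - y)) by (intros; unfold inI in *; lra).
  destruct (last_fixed_point_below rho (1 - x)) as [a [Ha [Fa Na]]].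
  - intros y Hy eps Heps. destruct (C (1 - y) (IR y Hy) eps Heps) as [d [Hd K]].
    exists d; split; auto. intros z Hz Hzy. unfold rho.
    replace (1 - phi (1 - z) - (1 - phi (1 - y))) with (- (phi (1 - z) - phi (1 - y))) by ring.
    rewrite Rabs_Ropp. apply K; [apply IR; auto |].
    replace (1 - z - (1 - y)) with (- (z - y)) by ring. rewrite Rabs_Ropp; auto.
  - unfold rho. replace (1 - 0) with 1 by ring. rewrite H1; ring.
  - apply IR; auto.
  - unfold rho. replace (1 - (1 - x)) with x by ring. lra.
  - exists (1 - a). split; [lra |]. split.
    + unfold rho in Fa. lra.
    + intros y Hy Fy. apply (Na (1 - y)); [lra |].
      unfold rho. replace (1 - (1 - y)) with y by ring. lra.
Qed.

Lemma fixed_point_component phi x : (forall y, inI y -> continuous_in_I phi y) ->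
  phi 0 = 0 -> phi 1 = 1 -> inI x -> phi x <> x ->
  exists a b, inI a /\ inI b /\ a < x < b /\ phi a = a /\ phi b = b /\
    forall y, a < y < b -> phi y <> y.
Proof.
  intros C H0 H1 Hx Nx.
  destruct (last_fixed_point_below phi x C H0 Hx Nx) as [a [Ha [Fa Na]]].
  destruct (first_fixed_point_above phi x C H1 Hx Nx) as [b [Hb [Fb Nb]]].
  exists a, b. unfold inI in *. repeat split; try lra; auto.
  intros y Hy. destruct (Rle_or_lt y x); [apply Na | apply Nb]; lra.
Qed.

(** * Maps with a common iterate commute *)

(* On the compact interval I, strict differentiability at every point amounts
   to being C^1. *)
Definition incr_C1_map (f : R -> R) : Prop :=
  maps_I f /\ incr_on_I f /\ forall c, inI c -> exists l, strict_deriv_I f c l.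

Lemma incr_C1_map_comp f g : incr_C1_map f -> incr_C1_map g -> incr_C1_map (fun x => g (f x)).
Proof.
  intros [Pf [If Df]] [Pg [Ig Dg]]. split; [| split].
  - intros x Hx. apply Pg, Pf, Hx.
  - intros x y Hx Hy Hxy. apply Ig; auto.
  - intros c Hc. destruct (Df c Hc) as [l Hl]. destruct (Dg (f c) (Pf c Hc)) as [l' Hl'].
    exists (l' * l). apply strict_deriv_I_comp; auto. apply incr_on_I_inj; auto.
Qed.

Lemma incr_C1_map_ext f g : (forall x, inI x -> f x = g x) -> incr_C1_map f -> incr_C1_map g.
Proof.
  intros E [Pf [If Df]]. split; [| split].
  - intros x Hx. rewrite <- E; auto.
  - intros x y Hx Hy Hxy. rewrite <- !E; auto.
  - intros c Hc. destruct (Df c Hc) as [l Hl]. exists l. apply (strict_deriv_I_ext f); auto.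
Qed.

Lemma incr_C1_map_continuous f : incr_C1_map f -> forall c, inI c -> continuous_in_I f c.
Proof.
  intros [_ [_ D]] c Hc. destruct (D c Hc) as [l Hl]. exact (strict_deriv_I_continuous f c l Hc Hl).
Qed.

Lemma incr_C1_map_of_C2 f : C2_on_I f -> maps_I f -> incr_on_I f -> incr_C1_map f.
Proof.
  intros C P I. split; [exact P | split; [exact I |]].
  destruct (C2_on_I_deriv f C) as [f1 [D1 [K1 _]]].
  intros c Hc. exists (f1 c). apply strict_deriv_I_of_C1; auto.
Qed.

Lemma fiter_lt_fiter P Q a b : incr_on_I P -> incr_on_I Q -> inI a -> inI b ->
  P a = a -> P b = b -> Q a = a -> Q b = b -> (forall y, a < y < b -> P y < Q y) ->
  forall k y, a < y < b -> fiter (S k) P y < fiter (S k) Q y.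
Proof.
  intros IP IQ Ia Ib Pa Pb Qa Qb PQ.
  assert (IN : forall y, a < y < b -> inI y) by (intros y Hy; unfold inI in *; lra).
  assert (G : forall k y, a < y < b ->
            a < fiter k P y < b /\ a < fiter k Q y < b /\ fiter k P y <= fiter k Q y).
  { induction k as [| k IH]; intros y Hy; simpl; [lra |].
    destruct (IH y Hy) as [B1 [B2 B3]].
    split; [apply (incr_maps_interval P a b) | split; [apply (incr_maps_interval Q a b) |]]; auto.
    apply Rle_trans with (Q (fiter k P y)); [left; apply PQ; auto |].
    apply incr_on_I_le; auto. }
  intros k y Hy. destruct (G k y Hy) as [B1 [B2 B3]]. simpl.
  apply Rle_lt_trans with (P (fiter k Q y)); [apply incr_on_I_le; auto | apply PQ; auto].
Qed.

Lemma kopell_fiter phi psi n W a b lam p :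
  inverse_on_I phi psi -> C2_on_I phi -> C2_on_I psi -> incr_on_I phi -> (0 < n)%nat ->
  inI a -> inI b -> phi a = a -> (forall y, a < y < b -> phi y < y) ->
  incr_on_I W -> W a = a -> W b = b ->
  (forall y, a < y < b -> W (fiter n phi y) = fiter n phi (W y)) ->
  strict_deriv_I W a lam -> a < p < b -> W p = p -> forall y, a < y < b -> W y = y.
Proof.
  intros Hinv Cphi Cpsi Iphi Hn Ia Ib Fa Below IW Wa Wb Wcomm Wderiv Hp Wp.
  pose proof Hinv as [Pphi _].
  destruct (bounded_distortion_of_C2 phi psi Hinv Cphi Cpsi Iphi) as [L [HL D]].
  destruct (bounded_distortion_fiter phi L D HL Iphi Pphi n) as [L' [HL' D']].
  apply (kopell_identity (fiter n phi) L' a b Ia Ib (fiter_incr phi Iphi Pphi n)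
           (fiter_maps_I phi Pphi n) D' HL') with lam p; auto.
  intros y Hy. assert (Iy : inI y) by (unfold inI in *; lra).
  destruct n as [| n']; [lia |]. split.
  - rewrite <- (fiter_fixed phi a Fa (S n')) at 1. apply (fiter_incr phi Iphi Pphi); auto; lra.
  - exact (fiter_lt_of_lt phi Iphi Pphi y Iy (Below y Hy) n').
Qed.

Section Common_iterate.

Variables (f finv h hinv : R -> R) (m n : nat).
Hypotheses (m_pos : (0 < m)%nat) (n_pos : (0 < n)%nat)
  (f_finv : inverse_on_I f finv) (f_C1 : incr_C1_map f) (finv_C1 : incr_C1_map finv)
  (h_hinv : inverse_on_I h hinv) (h_incr : incr_on_I h) (h_C2 : C2_on_I h) (hinv_C2 : C2_on_I hinv)
  (fiter_f_h : forall y, inI y -> fiter m f y = fiter n h y).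

Let u y := h (f (hinv y)).
Let W y := finv (u y).

Lemma incr_C1_h : incr_C1_map h.
Proof. apply incr_C1_map_of_C2; [exact h_C2 | exact (proj1 h_hinv) | exact h_incr]. Qed.

Lemma incr_C1_hinv : incr_C1_map hinv.
Proof.
  apply incr_C1_map_of_C2; [exact hinv_C2 | exact (proj1 (proj2 h_hinv)) |].
  exact (inverse_on_I_incr h hinv h_hinv h_incr).
Qed.

Lemma incr_C1_W : incr_C1_map W.
Proof.
  apply (incr_C1_map_comp u finv); [| exact finv_C1].
  apply (incr_C1_map_comp hinv (fun y => h (f y)) incr_C1_hinv).
  exact (incr_C1_map_comp f h f_C1 incr_C1_h).
Qed.

Lemma fixed_of_h_fixed c : inI c -> h c = c -> f c = c /\ finv c = c /\ hinv c = c /\ W c = c.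
Proof.
  intros Hc Hhc. pose proof f_finv as [_ [_ [Ef _]]]. pose proof h_hinv as [_ [_ [Eh _]]].
  assert (fc : f c = c).
  { destruct f_C1 as [Pf [If _]]. apply (fixed_of_fiter_fixed f c (Nat.pred m)); auto.
    replace (S (Nat.pred m)) with m by lia. rewrite fiter_f_h by exact Hc.
    apply fiter_fixed, Hhc. }
  assert (finvc : finv c = c) by (rewrite <- fc at 1; apply Ef, Hc).
  assert (hinvc : hinv c = c) by (rewrite <- Hhc at 1; apply Eh, Hc).
  repeat split; auto. unfold W, u. rewrite hinvc, fc, Hhc; exact finvc.
Qed.

Lemma commute_at_fixed x : inI x -> h x = x -> h (f x) = f (h x).
Proof. intros Hx Hhx. destruct (fixed_of_h_fixed x Hx Hhx) as [fx _]. rewrite fx, Hhx, fx. reflexivity. Qed.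

Lemma W_commute_fiter_h y : inI y -> W (fiter n h y) = fiter n h (W y).
Proof.
  intros Hy.
  destruct f_C1 as [Pf _]. pose proof h_hinv as [Ph [Phi _]].
  assert (PF := fiter_maps_I h Ph n).
  assert (hF : forall y, inI y -> h (fiter n h y) = fiter n h (h y)) by (intros; apply fiter_succ_r).
  assert (fF : forall y, inI y -> f (fiter n h y) = fiter n h (f y)).
  { intros z Hz. rewrite <- !fiter_f_h by auto. apply fiter_succ_r. }
  assert (hinvF := commute_inverse h hinv _ h_hinv PF hF).
  assert (finvF := commute_inverse f finv _ f_finv PF fF).
  unfold W, u. rewrite hinvF, fF, hF, finvF; auto.
Qed.

Lemma W_commute_fiter_hinv y : inI y -> W (fiter n hinv y) = fiter n hinv (W y).
Proof.
  intros Hy. destruct incr_C1_W as [PW _].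
  symmetry. apply (commute_inverse (fiter n h) (fiter n hinv) W); auto.
  - apply inverse_on_I_fiter, h_hinv.
  - intros z Hz. symmetry. apply W_commute_fiter_h, Hz.
Qed.

Lemma fiter_u_eq_fiter_f y : inI y -> fiter m u y = fiter m f y.
Proof.
  intros Hy. pose proof h_hinv as [Ph [Phi [Eh' Eh]]]. destruct f_C1 as [Pf _].
  assert (uk : forall k z, inI z -> fiter k u z = h (fiter k f (hinv z))).
  { induction k as [| k IH]; intros z Hz; simpl; [rewrite Eh; auto |].
    rewrite IH by auto. unfold u. rewrite Eh'; auto.
    apply (fiter_maps_I f Pf k), Phi, Hz. }
  rewrite uk, !fiter_f_h by auto.
  change (h (fiter n h (hinv y))) with (fiter (S n) h (hinv y)).
  rewrite fiter_succ_r, Eh; auto.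
Qed.

(* Without a fixed point, [W < id] (say) on [(a, b)], i.e. [u < f] there, whence
   [u^m < f^m] on [(a, b)], although [u^m = f^m]. *)
Lemma W_has_fixed_point a b : inI a -> inI b -> a < b -> h a = a -> h b = b ->
  exists p, a < p < b /\ W p = p.
Proof.
  intros Ia Ib Hab Ha Hb. apply NNPP. intros Nfix.
  destruct (fixed_of_h_fixed a Ia Ha) as [fa [_ [hinva _]]].
  destruct (fixed_of_h_fixed b Ib Hb) as [fb [_ [hinvb _]]].
  pose proof f_finv as [_ [_ [_ Ef]]]. pose proof f_C1 as [Pf [If _]].
  pose proof (incr_C1_map_comp hinv (fun y => h (f y)) incr_C1_hinv
                (incr_C1_map_comp f h f_C1 incr_C1_h)) as [_ [Iu _]].
  assert (ua : u a = a) by (unfold u; rewrite hinva, fa; exact Ha).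
  assert (ub : u b = b) by (unfold u; rewrite hinvb, fb; exact Hb).
  assert (IN : forall y, a < y < b -> inI y) by (intros y Hy; unfold inI in *; lra).
  assert (fW : forall y, a < y < b -> f (W y) = u y).
  { intros y Hy. apply Ef. destruct incr_C1_h as [Ph _]. apply Ph, Pf, incr_C1_hinv, IN, Hy. }
  set (x := (a + b) / 2). assert (Hx : a < x < b) by (unfold x; lra).
  pose proof (fiter_u_eq_fiter_f x (IN x Hx)) as Eqm.
  replace m with (S (Nat.pred m)) in Eqm by lia.
  destruct (fixpoint_free_sign W a b (incr_C1_map_continuous W incr_C1_W) Ia Ib)
    as [Below | Above].
  - intros y Hy Wy. apply Nfix. exists y. auto.
  - assert (Lt : forall y, a < y < b -> u y < f y).
    { intros y Hy. rewrite <- fW by exact Hy. apply If; auto. apply incr_C1_W, IN, Hy. }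
    pose proof (fiter_lt_fiter u f a b Iu If Ia Ib ua ub fa fb Lt (Nat.pred m) x Hx). lra.
  - assert (Gt : forall y, a < y < b -> f y < u y).
    { intros y Hy. rewrite <- fW by exact Hy. apply If; auto. apply incr_C1_W, IN, Hy. }
    pose proof (fiter_lt_fiter f u a b If Iu Ia Ib fa fb ua ub Gt (Nat.pred m) x Hx). lra.
Qed.

Lemma W_id_on_component a b : inI a -> inI b -> a < b -> h a = a -> h b = b ->
  (forall y, a < y < b -> h y <> y) -> forall y, a < y < b -> W y = y.
Proof.
  intros Ia Ib Hab Ha Hb Nfix.
  destruct (W_has_fixed_point a b Ia Ib Hab Ha Hb) as [p [Hp Wp]].
  destruct (fixed_of_h_fixed a Ia Ha) as [_ [_ [hinva Wa]]].
  destruct (fixed_of_h_fixed b Ib Hb) as [_ [_ [_ Wb]]].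
  pose proof incr_C1_W as [_ [IW DW]]. destruct (DW a Ia) as [lam Hlam].
  pose proof h_hinv as [_ [Phi [_ Eh]]].
  destruct (fixpoint_free_sign h a b (incr_C1_map_continuous h incr_C1_h) Ia Ib Nfix)
    as [Below | Above].
  - apply (kopell_fiter h hinv n W a b lam p); auto.
    intros y Hy. apply W_commute_fiter_h. unfold inI in *; lra.
  - apply (kopell_fiter hinv h n W a b lam p); auto.
    + apply inverse_on_I_sym, h_hinv.
    + apply (inverse_on_I_incr h); auto.
    + intros y Hy.
      assert (Hz := incr_maps_interval hinv a b (proj1 (proj2 incr_C1_hinv)) Ia Ib hinva
                      (proj1 (proj2 (proj2 (fixed_of_h_fixed b Ib Hb)))) y Hy).
      specialize (Above (hinv y) Hz). rewrite Eh in Above by (unfold inI in *; lra). lra.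
    + intros y Hy. apply W_commute_fiter_hinv. unfold inI in *; lra.
Qed.

Theorem commute_of_fiter_eq x : inI x -> h (f x) = f (h x).
Proof.
  intros Hx. destruct (Req_dec (h x) x) as [Fx | Nx]; [apply commute_at_fixed; auto |].
  pose proof h_hinv as [Ph [_ [Eh _]]]. pose proof f_finv as [Pf [_ [_ Ef]]].
  destruct (inverse_on_I_fix_endpoints h hinv h_hinv h_incr) as [h0 h1].
  destruct (fixed_point_component h x (incr_C1_map_continuous h incr_C1_h) h0 h1 Hx Nx)
    as [a [b [Ia [Ib [Hxab [Ha [Hb Nfix]]]]]]].
  assert (Hhx := incr_maps_interval h a b h_incr Ia Ib Ha Hb x Hxab).
  pose proof (W_id_on_component a b Ia Ib ltac:(lra) Ha Hb Nfix (h x) Hhx) as Wx.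
  unfold W, u in Wx. rewrite Eh in Wx by exact Hx.
  rewrite <- (Ef (h (f x))) by (apply Ph, Pf, Hx). rewrite Wx. reflexivity.
Qed.

End Common_iterate.

Theorem lemma5p7 (m n : nat) (g h ginv : R -> R) :
  (0 < m)%nat -> (0 < n)%nat ->
  orient_pres_C2_diffeo g -> orient_pres_C2_diffeo h ->
  inverse_on_I g ginv ->
  (forall x, inI x -> g (fiter m h (ginv x)) = fiter n h x) ->
  forall x, inI x -> h (g (h (ginv x))) = g (h (ginv (h x))).
Proof.
  intros Hm Hn [[gi [Hgi [Cg Cgi]]] Ig] [[hi [Hhi [Ch Chi]]] Ih] Hginv Hrel.
  assert (C1g := incr_C1_map_of_C2 g Cg (proj1 Hgi) Ig).
  assert (C1ginv : incr_C1_map ginv).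
  { apply (incr_C1_map_ext gi).
    - intros y Hy. destruct Hginv as [_ [Pginv [_ Eg]]]. rewrite <- (Eg y Hy) at 1.
      apply Hgi, Pginv, Hy.
    - exact (incr_C1_map_of_C2 gi Cgi (proj1 (proj2 Hgi)) (inverse_on_I_incr g gi Hgi Ig)). }
  assert (C1h := incr_C1_map_of_C2 h Ch (proj1 Hhi) Ih).
  assert (C1hi := incr_C1_map_of_C2 hi Chi (proj1 (proj2 Hhi)) (inverse_on_I_incr h hi Hhi Ih)).
  intros x Hx.
  refine (commute_of_fiter_eq (fun y => g (h (ginv y))) (fun y => g (hi (ginv y))) h hi m n
            Hm Hn _ _ _ Hhi Ih Ch Chi _ x Hx).
  - exact (inverse_on_I_conj g ginv h hi Hginv Hhi).
  - exact (incr_C1_map_comp _ g (incr_C1_map_comp ginv h C1ginv C1h) C1g).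
  - exact (incr_C1_map_comp _ g (incr_C1_map_comp ginv hi C1ginv C1hi) C1g).
  - intros y Hy. rewrite fiter_conj; [apply Hrel, Hy | exact Hginv | exact (proj1 Hhi) | exact Hy].
Qed.
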